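(* Let $s,d\ge1$ with $s\le 2^d$, and let $\mathbf{z}^0,\ldots,\mathbf{z}^{s-1}\in\{0,1\}^d$ be pairwise distinct. Then there is a two-layer Boolean threshold network with $s$ input nodes and $d$ output nodes that maps $\mathbf{h}^i[s]$ to $\mathbf{z}^i$ for every $i=0,\ldots,s-1$.
   Context: For integers $0\le i<s$, the step vector $\mathbf{h}^i[s]\in\{0,1\}^s$ has $\mathbf{h}^i[s]_j=1$ for $0\le j\le i$ and $0$ for $i<j<s$. A two-layer Boolean threshold network with $s$ inputs and $d$ outputs computes a map $\{0,1\}^s\to\{0,1\}^d$ each of whose coordinates is of the form $\mathbf{u}\mapsto[\mathbf{w}\cdot\mathbf{u}\ge\theta]$ (value $1$ iff $\mathbf{w}\cdot\mathbf{u}\ge\theta$) with $\mathbf{w}\in\mathbb{Z}^s$, $\theta\in\mathbb{Z}$. *)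

From mathcomp Require Import all_boot all_order all_algebra.
Set Implicit Arguments. Unset Strict Implicit. Unset Printing Implicit Defensive.
Import Order.TTheory GRing.Theory Num.Theory.
Local Open Scope ring_scope.

Definition bvec (n : nat) := {ffun 'I_n -> bool}.

Definition step_vec (s : nat) (i : nat) : bvec s := [ffun j : 'I_s => (j <= i)%N].

Definition threshold_unit (s : nat) (w : 'I_s -> int) (theta : int) (u : bvec s) : bool :=
  theta <= \sum_(j < s) w j * (u j)%:R.

Definition tln (s d : nat) (W : 'I_d -> 'I_s -> int) (Theta : 'I_d -> int)
  (u : bvec s) : bvec d :=
  [ffun k : 'I_d => threshold_unit (W k) (Theta k) u].

From mathcomp Require Import all_boot all_order all_algebra.
Import Order.TTheory GRing.Theory Num.Theory.
Local Open Scope ring_scope.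
Set Implicit Arguments. Unset Strict Implicit.

(* Against the step vector h^i the weights w_0, ..., w_i are summed, so taking
   for output k the successive differences w_j = z^j_k - z^(j-1)_k (with
   z^(-1)_k = 0) makes the weighted sum telescope to z^i_k, and the threshold 1
   reads off that bit. *)

Definition ord_ext (R : zmodType) (s : nat) (f : 'I_s -> R) (n : nat) : R :=
  if insub n is Some i then f i else 0.

Lemma ord_extE (R : zmodType) (s : nat) (f : 'I_s -> R) (i : 'I_s) :
  ord_ext f i = f i.
Proof. by rewrite /ord_ext valK. Qed.

Definition lag (R : zmodType) (f : nat -> R) (n : nat) : R :=
  if n is m.+1 then f m else 0.

Definition step_weights (R : zmodType) (f : nat -> R) (j : nat) : R :=
  lag f j.+1 - lag f j.

Lemma sum_step_weights (R : zmodType) (f : nat -> R) (n : nat) :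
  \sum_(j < n.+1) step_weights f j = f n.
Proof. by rewrite -(big_mkord xpredT) telescope_sumr // subr0. Qed.

Lemma dot_step_vec (R : pzSemiRingType) (s : nat) (w : nat -> R) (i : 'I_s) :
  \sum_(j < s) w j * (step_vec s i j)%:R = \sum_(j < i.+1) w j.
Proof.
rewrite (big_ord_widen s w (ltn_ord i)) [RHS]big_mkcond /=.
by apply: eq_bigr => j _; rewrite ffunE ltnS; case: leqP; rewrite ?mulr1 ?mulr0.
Qed.

Lemma ge1_bool (b : bool) : ((1 : int) <= b%:R) = b.
Proof. by case: b. Qed.

Theorem lemma13 (s d : nat) (hs : (1 <= s)%N) (hd : (1 <= d)%N) (hsd : (s <= 2 ^ d)%N)
  (z : 'I_s -> bvec d) (hz : injective z) :
  exists (W : 'I_d -> 'I_s -> int) (Theta : 'I_d -> int),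
    forall i : 'I_s, tln W Theta (step_vec s i) = z i.
Proof.
exists (fun k j => step_weights (ord_ext (fun i => (z i k)%:R)) j), (fun _ => 1).
move=> i; apply/ffunP => k.
by rewrite !ffunE /threshold_unit dot_step_vec sum_step_weights ord_extE ge1_bool.
Qed.
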